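(* Let $\omega:\mathbb N\to[1,\infty)$ be a weight on $\mathbb N_{\min}$ with $\sup_n\min(\omega(n),\omega(n+1))=+\infty$. Then $(\ell^1_\omega(\mathbb N_{\min}),M_2(\mathbb C))$ is not an AMNM pair.
   Context: $\mathbb N_{\min}$ is the semilattice $\mathbb N$ with product $\min$; every $\omega:\mathbb N\to[1,\infty)$ is a submultiplicative weight on it. $\ell^1_\omega(\mathbb N_{\min})$ is the Banach space of $a:\mathbb N\to\mathbb C$ with $\|a\|=\sum_n|a(n)|\omega(n)<\infty$, with convolution $\delta_m*\delta_n=\delta_{\min(m,n)}$. $M_2(\mathbb C)$ has the operator norm. For a bounded linear $T:A\to B$ between Banach algebras, $\operatorname{def}(T)=\sup\{\|T(xy)-T(x)T(y)\|:\|x\|,\|y\|\le1\}$ and $\operatorname{Mult}(A,B)$ is the set of bounded multiplicative linear maps (including $0$). $(A,B)$ is an AMNM pair if for every $K>0$, $\varepsilon>0$ there is $\delta>0$ such that every bounded linear $T:A\to B$ with $\|T\|\le K$ and $\operatorname{def}(T)\le\delta$ satisfies $\operatorname{dist}(T,\operatorname{Mult}(A,B))\le\varepsilon$ in operator norm. *)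

From Stdlib Require Import Reals Classical ClassicalDescription ClassicalEpsilon.
Open Scope R_scope.

Definition C : Type := (R * R)%type.
Definition C0 : C := (0, 0).
Definition Cadd (z w : C) : C := (fst z + fst w, snd z + snd w).
Definition Copp (z : C) : C := (- fst z, - snd z).
Definition Cmul (z w : C) : C :=
  (fst z * fst w - snd z * snd w, fst z * snd w + snd z * fst w).
Definition Cmod (z : C) : R := sqrt (fst z ^ 2 + snd z ^ 2).

Definition Rsup (E : R -> Prop) : R :=
  match excluded_middle_informative (bound E /\ exists x, E x) with
  | left H => proj1_sig (completeness E (proj1 H) (proj2 H))
  | right _ => 0
  end.
Definition Rinf (E : R -> Prop) : R := - Rsup (fun x => E (- x)).

(* sum of a convergent real series (0 if it diverges) *)
Definition Rsum (u : nat -> R) : R :=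
  match excluded_middle_informative
          (exists l, Un_cv (fun N => sum_f_R0 u N) l) with
  | left H => proj1_sig (constructive_indefinite_description _ H)
  | right _ => 0
  end.
Definition Csum (u : nat -> C) : C :=
  (Rsum (fun n => fst (u n)), Rsum (fun n => snd (u n))).

Definition inL1 (w : nat -> R) (a : nat -> C) : Prop :=
  exists l, Un_cv (fun N => sum_f_R0 (fun n => Cmod (a n) * w n) N) l.
Definition l1norm (w : nat -> R) (a : nat -> C) : R :=
  Rsum (fun n => Cmod (a n) * w n).
Definition l1add (a b : nat -> C) : nat -> C := fun n => Cadd (a n) (b n).
Definition l1scal (c : C) (a : nat -> C) : nat -> C := fun n => Cmul c (a n).
(* convolution on N_min: delta_m * delta_n = delta_(min m n),
   i.e. (a*b)(k) = sum_{m,n : min m n = k} a(m) b(n) *)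
Definition conv (a b : nat -> C) : nat -> C := fun k =>
  Csum (fun m => Csum (fun n =>
    if Nat.eqb (Nat.min m n) k then Cmul (a m) (b n) else C0)).

Definition M2 : Type := ((C * C) * (C * C))%type.  (* ((a,b),(c,d)) = [a b; c d] *)
Definition V2 : Type := (C * C)%type.
Definition M2app (A : M2) (v : V2) : V2 :=
  let '((a, b), (c, d)) := A in
  (Cadd (Cmul a (fst v)) (Cmul b (snd v)), Cadd (Cmul c (fst v)) (Cmul d (snd v))).
Definition M2mul (A B : M2) : M2 :=
  let '((a, b), (c, d)) := A in
  let '((e, f), (g, h)) := B in
  ((Cadd (Cmul a e) (Cmul b g), Cadd (Cmul a f) (Cmul b h)),
   (Cadd (Cmul c e) (Cmul d g), Cadd (Cmul c f) (Cmul d h))).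
Definition M2add (A B : M2) : M2 :=
  let '((a, b), (c, d)) := A in
  let '((e, f), (g, h)) := B in
  ((Cadd a e, Cadd b f), (Cadd c g, Cadd d h)).
Definition M2opp (A : M2) : M2 :=
  let '((a, b), (c, d)) := A in ((Copp a, Copp b), (Copp c, Copp d)).
Definition M2sub (A B : M2) : M2 := M2add A (M2opp B).
Definition M2scal (z : C) (A : M2) : M2 :=
  let '((a, b), (c, d)) := A in ((Cmul z a, Cmul z b), (Cmul z c, Cmul z d)).
Definition V2norm (v : V2) : R := sqrt (Cmod (fst v) ^ 2 + Cmod (snd v) ^ 2).
Definition M2norm (A : M2) : R :=
  Rsup (fun r => exists v : V2, V2norm v <= 1 /\ r = V2norm (M2app A v)).

(** * Maps l^1_omega(N_min) -> M_2(C).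
   A map is a function on all sequences; only its values on l^1_omega matter. *)
Definition L1map : Type := (nat -> C) -> M2.

Definition is_bounded_linear (w : nat -> R) (T : L1map) : Prop :=
  (forall a b, inL1 w a -> inL1 w b -> T (l1add a b) = M2add (T a) (T b)) /\
  (forall c a, inL1 w a -> T (l1scal c a) = M2scal c (T a)) /\
  (exists K, forall a, inL1 w a -> M2norm (T a) <= K * l1norm w a).

Definition opnorm (w : nat -> R) (T : L1map) : R :=
  Rsup (fun r => exists a, inL1 w a /\ l1norm w a <= 1 /\ r = M2norm (T a)).

Definition defect (w : nat -> R) (T : L1map) : R :=
  Rsup (fun r => exists x y, inL1 w x /\ inL1 w y /\
          l1norm w x <= 1 /\ l1norm w y <= 1 /\
          r = M2norm (M2sub (T (conv x y)) (M2mul (T x) (T y)))).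

(* Mult(A,B): bounded multiplicative linear maps (including 0) *)
Definition is_mult (w : nat -> R) (S : L1map) : Prop :=
  is_bounded_linear w S /\
  forall a b, inL1 w a -> inL1 w b -> S (conv a b) = M2mul (S a) (S b).

Definition dist_mult (w : nat -> R) (T : L1map) : R :=
  Rinf (fun r => exists S, is_mult w S /\
          r = opnorm w (fun a => M2sub (T a) (S a))).

Definition AMNM_pair (w : nat -> R) : Prop :=
  forall K eps, 0 < K -> 0 < eps ->
  exists delta, 0 < delta /\
    forall T : L1map, is_bounded_linear w T ->
      opnorm w T <= K -> defect w T <= delta -> dist_mult w T <= eps.

(* For a sequence a put phi_k(a) = sum_(m >= k) a(m).  Since min(m, p) >= k iff
   m >= k and p >= k, every phi_k is a character of l^1_w(N_min); concretely
   (x * y)(j) = x(j) phi_j(y) + y(j) phi_(j+1)(x), and this telescopes as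
   phi_j(x) phi_j(y) - phi_(j+1)(x) phi_(j+1)(y).  For each n consider
       T_n(a) = [ phi_(n+2)(a)   w(n) a(n) - w(n+1) a(n+1) ]
                [ 0              phi_n(a)                  ].
   Then ||T_n|| <= 6 and T_n(xy) - T_n(x) T_n(y) has the single entry
   (w(n) + w(n+1)) x(n+1) y(n), whence def(T_n) <= 1/w(n) + 1/w(n+1), which is
   small for suitable n.  On the other hand a multiplicative S maps delta_n and
   delta_(n+1) to idempotents P, Q with PQ = QP = P; for 2x2 matrices this forces
   P = 0, P = Q or Q = 1, so the corner entries of S cannot approach the values
   +1 and -1 that T_n takes at delta_n / w(n) and delta_(n+1) / w(n+1).  Hence
   dist(T_n, Mult) >= 1/2 for every n. *)

From Pilot Require Import Defs.
From Stdlib Require Import Reals Lra Lia Classical ClassicalEpsilon FunctionalExtensionality.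
From Coquelicot Require Import Rbar Lim_seq Hierarchy Series.
From Coquelicot Require Complex.
Open Scope R_scope.

Lemma pair_eq {A B : Type} (a c : A) (b d : B) : a = c -> b = d -> (a, b) = (c, d).
Proof. intros; subst; reflexivity. Qed.

Ltac csolve :=
  repeat match goal with
         | z : Defs.C |- _ => destruct z
         | z : M2 |- _ => destruct z
         | z : (Defs.C * Defs.C)%type |- _ => destruct z
         end;
  cbv [Cadd Cmul Copp C0 M2add M2mul M2opp M2sub M2scal M2app fst snd];
  repeat apply pair_eq; ring.

Definition one : Defs.C := (1, 0).

Lemma Cadd_0_l z : Cadd C0 z = z.
Proof. csolve. Qed.
Lemma Cadd_0_r z : Cadd z C0 = z.
Proof. csolve. Qed.
Lemma Cmul_0_r z : Cmul z C0 = C0.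
Proof. csolve. Qed.

(* [Defs.Cmod] is convertible to Coquelicot's complex modulus. *)
Lemma Cmod_nonneg z : 0 <= Cmod z.
Proof. apply sqrt_pos. Qed.
Lemma Cmod_add z w : Cmod (Cadd z w) <= Cmod z + Cmod w.
Proof. exact (Complex.Cmod_triangle z w). Qed.
Lemma Cmod_mul z w : Cmod (Cmul z w) = Cmod z * Cmod w.
Proof. exact (Complex.Cmod_mult z w). Qed.
Lemma Cmod_opp z : Cmod (Copp z) = Cmod z.
Proof. exact (Complex.Cmod_opp z). Qed.
Lemma Cmod_C0 : Cmod C0 = 0.
Proof. exact Complex.Cmod_0. Qed.
Lemma Cmod_real r : Cmod (r, 0) = Rabs r.
Proof. exact (Complex.Cmod_R r). Qed.
Lemma Cmod_fst z : Rabs (fst z) <= Cmod z.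
Proof. exact (Complex.re_le_Cmod z). Qed.
Lemma Cmod_snd z : Rabs (snd z) <= Cmod z.
Proof. eapply Rle_trans; [apply Rmax_r | exact (Complex.Rmax_Cmod z)]. Qed.
Lemma Cmod_le_parts z : Cmod z <= Rabs (fst z) + Rabs (snd z).
Proof.
  unfold Cmod. rewrite <- (pow2_abs (fst z)), <- (pow2_abs (snd z)).
  rewrite <- (sqrt_Rsqr (Rabs (fst z) + Rabs (snd z))) by
    (pose proof (Rabs_pos (fst z)); pose proof (Rabs_pos (snd z)); lra).
  apply sqrt_le_1_alt. unfold Rsqr.
  pose proof (Rabs_pos (fst z)); pose proof (Rabs_pos (snd z)). nra.
Qed.

Lemma Cmul_eq0 z w : Cmul z w = C0 -> z = C0 \/ w = C0.
Proof.
  destruct z as [a b], w as [c d]; unfold Cmul, C0; simpl.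
  intros H; injection H as H1 H2.
  destruct (Req_dec (a * a + b * b) 0) as [E | E].
  - left. assert (a = 0) by nra. assert (b = 0) by nra. subst; reflexivity.
  - right.
    assert (Hc : (a * a + b * b) * c = 0)
      by (replace ((a * a + b * b) * c) with (a * (a * c - b * d) + b * (a * d + b * c))
            by ring; rewrite H1, H2; ring).
    assert (Hd : (a * a + b * b) * d = 0)
      by (replace ((a * a + b * b) * d) with (a * (a * d + b * c) - b * (a * c - b * d))
            by ring; rewrite H1, H2; ring).
    apply Rmult_integral in Hc; apply Rmult_integral in Hd.
    destruct Hc as [Hc | ->]; [contradiction |].
    destruct Hd as [Hd | ->]; [contradiction | reflexivity].
Qed.

Lemma Cmul_sub_one_eq0 t z : t <> one -> Cmul (Cadd t (Copp one)) z = C0 -> z = C0.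
Proof.
  intros Ht H. apply Cmul_eq0 in H. destruct H as [H | H]; [exfalso | exact H].
  apply Ht. destruct t as [x y]; unfold Cadd, Copp, C0, one in *; simpl in H.
  injection H as H1 H2. apply pair_eq; lra.
Qed.

Lemma C_idempotent x : Cmul x x = x -> x = C0 \/ x = one.
Proof.
  intros H. destruct (classic (x = one)) as [E | E]; [right; exact E | left].
  apply (Cmul_sub_one_eq0 x); [exact E |].
  replace (Cmul (Cadd x (Copp one)) x) with (Cadd (Cmul x x) (Copp x)) by (unfold one; csolve).
  rewrite H. csolve.
Qed.

(* [Rsup] returns 0 on unbounded or empty sets, so upper estimates need a
   nonnegative bound (or a nonempty set), and lower estimates need boundedness. *)
Lemma Rsup_le0 (E : R -> Prop) K : 0 <= K -> (forall r, E r -> r <= K) -> Rsup E <= K.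
Proof.
  intros HK Hub. unfold Rsup. destruct (excluded_middle_informative _) as [H | H].
  - destruct (completeness E _ _) as [l [Hl1 Hl]]; simpl. apply Hl. intros r Hr; auto.
  - exact HK.
Qed.

Lemma Rsup_le (E : R -> Prop) K : (exists x, E x) -> (forall r, E r -> r <= K) -> Rsup E <= K.
Proof.
  intros Hne Hub. unfold Rsup. destruct (excluded_middle_informative _) as [H | H].
  - destruct (completeness E _ _) as [l [Hl1 Hl]]; simpl. apply Hl. intros r Hr; auto.
  - exfalso. apply H. split; [exists K; intros r Hr; auto | exact Hne].
Qed.

Lemma Rsup_ge (E : R -> Prop) K r : (forall x, E x -> x <= K) -> E r -> r <= Rsup E.
Proof.
  intros Hub Hr. unfold Rsup. destruct (excluded_middle_informative _) as [H | H].
  - destruct (completeness E _ _) as [l [Hl Hl2]]; simpl. apply Hl; exact Hr.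
  - exfalso. apply H. split; [exists K; exact Hub | exists r; exact Hr].
Qed.

Lemma Rinf_ge (E : R -> Prop) c : (exists x, E x) -> (forall x, E x -> c <= x) -> c <= Rinf E.
Proof.
  intros [x Hx] Hlb. unfold Rinf.
  enough (Rsup (fun y => E (- y)) <= - c) by lra.
  apply Rsup_le.
  - exists (- x). rewrite Ropp_involutive. exact Hx.
  - intros r Hr. apply Hlb in Hr. lra.
Qed.

Definition ent12 (M : M2) : Defs.C := snd (fst M).
Definition esum (M : M2) : R :=
  let '((a, b), (c, d)) := M in Cmod a + Cmod b + Cmod c + Cmod d.

Lemma esum_nonneg M : 0 <= esum M.
Proof.
  destruct M as [[a b] [c d]]; simpl.
  pose proof (Cmod_nonneg a); pose proof (Cmod_nonneg b);
  pose proof (Cmod_nonneg c); pose proof (Cmod_nonneg d). lra.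
Qed.

Lemma V2norm_fst v : Cmod (fst v) <= V2norm v.
Proof.
  unfold V2norm. rewrite <- (Rabs_pos_eq (Cmod (fst v))) at 1 by apply Cmod_nonneg.
  apply (Cmod_fst (Cmod (fst v), Cmod (snd v))).
Qed.
Lemma V2norm_snd v : Cmod (snd v) <= V2norm v.
Proof.
  unfold V2norm. rewrite <- (Rabs_pos_eq (Cmod (snd v))) at 1 by apply Cmod_nonneg.
  apply (Cmod_snd (Cmod (fst v), Cmod (snd v))).
Qed.
Lemma V2norm_le v : V2norm v <= Cmod (fst v) + Cmod (snd v).
Proof.
  pose proof (Cmod_le_parts (Cmod (fst v), Cmod (snd v))) as H; simpl in H.
  rewrite !Rabs_pos_eq in H by apply Cmod_nonneg. exact H.
Qed.

Lemma M2app_le_esum M v : V2norm v <= 1 -> V2norm (M2app M v) <= esum M.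
Proof.
  destruct M as [[a b] [c d]]. intros Hv.
  pose proof (V2norm_fst v); pose proof (V2norm_snd v).
  assert (Hrow : forall p q, Cmod (Cadd (Cmul p (fst v)) (Cmul q (snd v))) <= Cmod p + Cmod q).
  { intros p q. eapply Rle_trans; [apply Cmod_add |]. rewrite !Cmod_mul.
    pose proof (Cmod_nonneg p); pose proof (Cmod_nonneg q);
    pose proof (Cmod_nonneg (fst v)); pose proof (Cmod_nonneg (snd v)). nra. }
  eapply Rle_trans; [apply V2norm_le |]. simpl.
  pose proof (Hrow a b); pose proof (Hrow c d). lra.
Qed.

Lemma M2norm_le_esum M : M2norm M <= esum M.
Proof.
  apply Rsup_le0; [apply esum_nonneg |].
  intros r [v [Hv ->]]. apply M2app_le_esum; exact Hv.
Qed.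

Lemma entries_le_M2norm (a b c d : Defs.C) :
  Cmod a <= M2norm ((a, b), (c, d)) /\ Cmod b <= M2norm ((a, b), (c, d)) /\
  Cmod c <= M2norm ((a, b), (c, d)) /\ Cmod d <= M2norm ((a, b), (c, d)).
Proof.
  set (M := ((a, b), (c, d))).
  assert (Hcol : forall v, V2norm v <= 1 -> V2norm (M2app M v) <= M2norm M).
  { intros v Hv. apply (Rsup_ge _ (esum M)); [| exists v; auto].
    intros r [u [Hu ->]]. apply M2app_le_esum; exact Hu. }
  assert (Hunit : forall z, Cmod z = 1 -> V2norm (z, C0) <= 1 /\ V2norm (C0, z) <= 1).
  { intros z Hz. unfold V2norm; simpl. rewrite Hz, Cmod_C0.
    split; match goal with |- sqrt ?x <= 1 => replace x with 1 by ring end;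
      rewrite sqrt_1; lra. }
  assert (Hone : Cmod one = 1) by (unfold one; rewrite Cmod_real; apply Rabs_R1).
  destruct (Hunit one Hone) as [H1 H2].
  pose proof (Hcol _ H1) as G1; pose proof (Hcol _ H2) as G2.
  replace (M2app M (one, C0)) with ((a, c) : V2) in G1 by (unfold M, one; csolve).
  replace (M2app M (C0, one)) with ((b, d) : V2) in G2 by (unfold M, one; csolve).
  pose proof (V2norm_fst (a, c)); pose proof (V2norm_snd (a, c));
  pose proof (V2norm_fst (b, d)); pose proof (V2norm_snd (b, d)); simpl in *. lra.
Qed.

Lemma ent12_sub X Y : ent12 (M2sub X Y) = Cadd (ent12 X) (Copp (ent12 Y)).
Proof. destruct X as [[a b] [c d]], Y as [[e f] [g h]]; reflexivity. Qed.

Lemma ent12_le_M2norm M : Cmod (ent12 M) <= M2norm M.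
Proof. destruct M as [[a b] [c d]]. apply entries_le_M2norm. Qed.

Lemma esum_le_M2norm M : esum M <= 4 * M2norm M.
Proof.
  destruct M as [[a b] [c d]]. pose proof (entries_le_M2norm a b c d). simpl. lra.
Qed.

Lemma M2norm_sub_le X Y : M2norm (M2sub X Y) <= 4 * M2norm X + 4 * M2norm Y.
Proof.
  eapply Rle_trans; [apply M2norm_le_esum |].
  pose proof (esum_le_M2norm X); pose proof (esum_le_M2norm Y).
  enough (esum (M2sub X Y) <= esum X + esum Y) by lra.
  destruct X as [[a b] [c d]], Y as [[e f] [g h]]; simpl.
  pose proof (Cmod_add a (Copp e)); pose proof (Cmod_add b (Copp f));
  pose proof (Cmod_add c (Copp g)); pose proof (Cmod_add d (Copp h)).
  rewrite !Cmod_opp in *. lra.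
Qed.

(** * Idempotent 2x2 matrices *)

Definition M0 : M2 := ((C0, C0), (C0, C0)).
Definition M1 : M2 := ((one, C0), (C0, one)).
Definition tr (M : M2) : Defs.C := let '((a, b), (c, d)) := M in Cadd a d.

Lemma idem_cases M : M2mul M M = M -> M = M0 \/ M = M1 \/ tr M = one.
Proof.
  destruct M as [[a b] [c d]]. intros H. cbv [M2mul] in H. injection H as H1 H2 H3 H4.
  destruct (classic (Cadd a d = one)) as [Ht | Ht]; [right; right; exact Ht |].
  assert (Hb : b = C0).
  { apply (Cmul_sub_one_eq0 _ _ Ht).
    replace (Cmul (Cadd (Cadd a d) (Copp one)) b)
      with (Cadd (Cadd (Cmul a b) (Cmul b d)) (Copp b)) by (unfold one; csolve).
    rewrite H2. csolve. }
  assert (Hc : c = C0).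
  { apply (Cmul_sub_one_eq0 _ _ Ht).
    replace (Cmul (Cadd (Cadd a d) (Copp one)) c)
      with (Cadd (Cadd (Cmul c a) (Cmul d c)) (Copp c)) by (unfold one; csolve).
    rewrite H3. csolve. }
  subst b c.
  assert (Ha : Cmul a a = a) by (rewrite <- H1 at 3; csolve).
  assert (Hd : Cmul d d = d) by (rewrite <- H4 at 3; csolve).
  destruct (C_idempotent a Ha) as [-> | ->], (C_idempotent d Hd) as [-> | ->].
  - left; reflexivity.
  - exfalso; apply Ht; unfold one; csolve.
  - exfalso; apply Ht; unfold one; csolve.
  - right; left; reflexivity.
Qed.

(* Two idempotents [A <= B] (i.e. [AB = BA = A]): either [A = 0], [A = B] or
   [B = 1].  Otherwise [A], [B - A] and [B] would all be of rank one,
   contradicting additivity of the trace. *)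
Lemma idem_chain A B : M2mul A A = A -> M2mul B B = B -> M2mul A B = A -> M2mul B A = A ->
  A = M0 \/ A = B \/ B = M1.
Proof.
  intros HA HB HAB HBA.
  assert (HC : M2mul (M2sub B A) (M2sub B A) = M2sub B A).
  { replace (M2mul (M2sub B A) (M2sub B A)) with
      (M2sub (M2sub (M2add (M2mul B B) (M2mul A A)) (M2mul B A)) (M2mul A B)) by csolve.
    rewrite HA, HB, HAB, HBA. csolve. }
  assert (HAC : M2mul A (M2sub B A) = M0).
  { replace (M2mul A (M2sub B A)) with (M2sub (M2mul A B) (M2mul A A)) by csolve.
    rewrite HAB, HA. unfold M0. csolve. }
  assert (Htr : tr B = Cadd (tr A) (tr (M2sub B A))) by (unfold tr; csolve).
  destruct (idem_cases A HA) as [EA | [EA | EA]]; [left; exact EA | |].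
  - right; right. rewrite EA in HBA. rewrite <- HBA. unfold M1, one. csolve.
  - destruct (idem_cases _ HC) as [EC | [EC | EC]].
    + right; left. replace B with (M2add A (M2sub B A)) by csolve.
      rewrite EC. unfold M0. csolve.
    + left. rewrite EC in HAC. rewrite <- HAC. unfold M1, one. csolve.
    + right; right. rewrite EA, EC in Htr.
      destruct (idem_cases B HB) as [EB | [EB | EB]]; [| exact EB |]; exfalso.
      * subst B. unfold tr, M0, C0, one, Cadd in Htr; simpl in Htr. injection Htr. lra.
      * rewrite EB in Htr. unfold one, Cadd in Htr; simpl in Htr. injection Htr. lra.
Qed.

Lemma Rsum_is_series u l : is_series u l -> Rsum u = l.
Proof.
  intros H.
  assert (Hcv : Un_cv (sum_f_R0 u) l) by exact (proj1 (is_series_Reals u l) H).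
  unfold Rsum. destruct (excluded_middle_informative _) as [H' | H'].
  - destruct (constructive_indefinite_description _ _) as [l' Hl']; simpl.
    eapply UL_sequence; eauto.
  - exfalso; apply H'; eauto.
Qed.

Definition Cseries (u : nat -> Defs.C) (l : Defs.C) : Prop :=
  is_series (fun m => fst (u m)) (fst l) /\ is_series (fun m => snd (u m)) (snd l).

Lemma Csum_unique u l : Cseries u l -> Csum u = l.
Proof.
  intros [H1 H2]. unfold Csum.
  rewrite (Rsum_is_series _ _ H1), (Rsum_is_series _ _ H2). destruct l; reflexivity.
Qed.

Lemma Cseries_ext u v l : (forall m, u m = v m) -> Cseries u l -> Cseries v l.
Proof.
  intros E [H1 H2]. split.
  - apply (is_series_ext (fun m => fst (u m))); [intros m; rewrite E; reflexivity | exact H1].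
  - apply (is_series_ext (fun m => snd (u m))); [intros m; rewrite E; reflexivity | exact H2].
Qed.

Lemma Cseries_add u v l l' :
  Cseries u l -> Cseries v l' -> Cseries (fun m => Cadd (u m) (v m)) (Cadd l l').
Proof.
  intros [H1 H2] [H3 H4].
  split; [exact (is_series_plus _ _ _ _ H1 H3) | exact (is_series_plus _ _ _ _ H2 H4)].
Qed.

Lemma Cseries_scal c u l : Cseries u l -> Cseries (fun m => Cmul c (u m)) (Cmul c l).
Proof.
  intros [H1 H2]. split; simpl.
  - exact (is_series_minus _ _ _ _ (is_series_scal_l (fst c) _ _ H1)
                                   (is_series_scal_l (snd c) _ _ H2)).
  - exact (is_series_plus _ _ _ _ (is_series_scal_l (fst c) _ _ H2)
                                  (is_series_scal_l (snd c) _ _ H1)).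
Qed.

Definition point (k : nat) (v : Defs.C) (m : nat) : Defs.C := if Nat.eqb m k then v else C0.

Lemma sum_point k (v : R) N :
  sum_f_R0 (fun m => if Nat.eqb m k then v else 0) N = if Nat.leb k N then v else 0.
Proof.
  induction N as [| N IH]; cbn [sum_f_R0].
  - destruct k; reflexivity.
  - rewrite IH. destruct (Nat.leb_spec k N), (Nat.eqb_spec (S N) k), (Nat.leb_spec k (S N));
      try lia; ring.
Qed.

Lemma is_series_point k (v : R) : is_series (fun m => if Nat.eqb m k then v else 0) v.
Proof.
  apply is_series_Reals. intros eps Heps. exists k. intros N HN.
  rewrite sum_point. destruct (Nat.leb_spec k N); [| lia].
  unfold R_dist. rewrite Rminus_diag, Rabs_R0. exact Heps.
Qed.

Lemma Cseries_point k v : Cseries (point k v) v.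
Proof.
  split; [apply (is_series_ext (fun m => if Nat.eqb m k then fst v else 0))
         | apply (is_series_ext (fun m => if Nat.eqb m k then snd v else 0))];
    try apply is_series_point; intros m; unfold point; destruct (Nat.eqb m k); reflexivity.
Qed.

Definition acex (u : nat -> Defs.C) : Prop := ex_series (fun m => Cmod (u m)).

Lemma Cseries_Csum u : acex u -> Cseries u (Csum u).
Proof.
  intros Hu.
  assert (Hpart : forall f : Defs.C -> R, (forall z, Rabs (f z) <= Cmod z) ->
                    is_series (fun m => f (u m)) (Rsum (fun m => f (u m)))).
  { intros f Hf.
    assert (Hex : ex_series (fun m => f (u m)))
      by exact (@ex_series_le R_AbsRing R_CompleteNormedModule _ _ (fun m => Hf (u m)) Hu).
    rewrite (Rsum_is_series _ _ (Series_correct _ Hex)). apply Series_correct; exact Hex. }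
  split; apply Hpart; [apply Cmod_fst | apply Cmod_snd].
Qed.

(** * The tail functionals [phi_k(a) = sum_(m >= k) a m] *)

Definition trunc (k : nat) (a : nat -> Defs.C) (m : nat) : Defs.C :=
  if Nat.leb k m then a m else C0.
Definition tailsum (k : nat) (a : nat -> Defs.C) : Defs.C := Csum (trunc k a).

Lemma Cseries_tailsum k a : acex a -> Cseries (trunc k a) (tailsum k a).
Proof.
  intros Ha. apply Cseries_Csum.
  apply (@ex_series_le R_AbsRing R_CompleteNormedModule _ (fun m => Cmod (a m)));
    [intros m | exact Ha].
  unfold trunc. destruct (Nat.leb k m).
  - change (Rabs (Cmod (a m)) <= Cmod (a m)).
    rewrite Rabs_pos_eq by apply Cmod_nonneg. apply Rle_refl.
  - change (Rabs (Cmod C0) <= Cmod (a m)).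
    rewrite Cmod_C0, Rabs_R0. apply Cmod_nonneg.
Qed.

Lemma tailsum_split k a : acex a -> tailsum k a = Cadd (a k) (tailsum (S k) a).
Proof.
  intros Ha. apply Csum_unique.
  apply (Cseries_ext (fun m => Cadd (point k (a k) m) (trunc (S k) a m))).
  - intros m. unfold point, trunc.
    destruct (Nat.eqb_spec m k), (Nat.leb_spec (S k) m), (Nat.leb_spec k m); subst;
      try lia; rewrite ?Cadd_0_l, ?Cadd_0_r; reflexivity.
  - apply Cseries_add; [apply Cseries_point | apply Cseries_tailsum; exact Ha].
Qed.

Lemma tailsum_add k a b : acex a -> acex b ->
  tailsum k (l1add a b) = Cadd (tailsum k a) (tailsum k b).
Proof.
  intros Ha Hb. apply Csum_unique.
  apply (Cseries_ext (fun m => Cadd (trunc k a m) (trunc k b m))).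
  - intros m. unfold trunc, l1add. destruct (Nat.leb k m); [reflexivity | csolve].
  - apply Cseries_add; apply Cseries_tailsum; assumption.
Qed.

Lemma tailsum_scal k c a : acex a -> tailsum k (l1scal c a) = Cmul c (tailsum k a).
Proof.
  intros Ha. apply Csum_unique.
  apply (Cseries_ext (fun m => Cmul c (trunc k a m))).
  - intros m. unfold trunc, l1scal. destruct (Nat.leb k m); [reflexivity | csolve].
  - apply Cseries_scal, Cseries_tailsum; exact Ha.
Qed.

Lemma tailsum_point j k v : tailsum j (point k v) = if Nat.leb j k then v else C0.
Proof.
  apply Csum_unique. apply (Cseries_ext (point k (if Nat.leb j k then v else C0))).
  - intros m. unfold point, trunc.
    destruct (Nat.eqb_spec m k), (Nat.leb_spec j k), (Nat.leb_spec j m); subst; try lia; reflexivity.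
  - apply Cseries_point.
Qed.

Lemma Csum_partial a N : acex a ->
  fst (Csum a) = sum_f_R0 (fun m => fst (a m)) N + fst (tailsum (S N) a) /\
  snd (Csum a) = sum_f_R0 (fun m => snd (a m)) N + snd (tailsum (S N) a).
Proof.
  intros Ha. induction N as [| N [IH1 IH2]].
  - change (Csum a) with (tailsum 0 a).
    rewrite (tailsum_split 0 a Ha). simpl. split; ring.
  - rewrite (tailsum_split (S N) a Ha) in IH1, IH2. simpl in *. split; lra.
Qed.

Lemma tailsum_vanish a : acex a ->
  is_lim_seq (fun k => fst (tailsum k a)) 0 /\ is_lim_seq (fun k => snd (tailsum k a)) 0.
Proof.
  intros Ha. destruct (Cseries_Csum a Ha) as [H1 H2].
  assert (Hlim : forall (f : Defs.C -> R) (l : R),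
    is_series (fun m => f (a m)) l ->
    (forall N, l = sum_f_R0 (fun m => f (a m)) N + f (tailsum (S N) a)) ->
    is_lim_seq (fun k => f (tailsum k a)) 0).
  { intros f l Hs Hp. apply is_lim_seq_incr_1.
    apply (is_lim_seq_ext (fun N => l - sum_n (fun m => f (a m)) N)).
    - intros N. rewrite sum_n_Reals, (Hp N). ring.
    - replace (Finite 0) with (Finite (l - l)) by (f_equal; ring).
      apply is_lim_seq_minus'; [apply is_lim_seq_const | exact Hs]. }
  split; [apply (Hlim fst _ H1) | apply (Hlim snd _ H2)];
    intros N; apply (Csum_partial a N Ha).
Qed.

(** * Convolution on N_min *)

Lemma acex_point k v : acex (point k v).
Proof.
  exists (Cmod v). apply (is_series_ext (fun m => if Nat.eqb m k then Cmod v else 0));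
    [| apply is_series_point].
  intros m. unfold point. destruct (Nat.eqb m k); [reflexivity | rewrite Cmod_C0; reflexivity].
Qed.

(* Row [m] of the convolution sum for [(x * y)(j)]: it vanishes for [m < j], equals
   [x j * phi_j(y)] for [m = j], and reduces to the term [p = j] for [m > j]. *)
Lemma conv_row x y m j : acex y ->
  Csum (fun p => if Nat.eqb (Nat.min m p) j then Cmul (x m) (y p) else C0)
  = Cadd (point j (Cmul (x j) (tailsum j y)) m) (Cmul (y j) (trunc (S j) x m)).
Proof.
  intros Hy. apply Csum_unique. unfold point, trunc.
  destruct (Nat.lt_total m j) as [Hlt | [-> | Hgt]].
  - rewrite (proj2 (Nat.eqb_neq m j)), (proj2 (Nat.leb_gt (S j) m)) by lia.
    rewrite Cmul_0_r, Cadd_0_l.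
    apply (Cseries_ext (point 0 C0)); [| apply Cseries_point].
    intros p. unfold point. destruct (Nat.eqb_spec (Nat.min m p) j); [lia |].
    destruct (Nat.eqb p 0); reflexivity.
  - rewrite Nat.eqb_refl, (proj2 (Nat.leb_gt (S j) j)), Cmul_0_r, Cadd_0_r by lia.
    apply (Cseries_ext (fun p => Cmul (x j) (trunc j y p)));
      [| apply Cseries_scal, Cseries_tailsum; exact Hy].
    intros p. unfold trunc.
    destruct (Nat.eqb_spec (Nat.min j p) j), (Nat.leb_spec j p); try lia;
      [reflexivity | apply Cmul_0_r].
  - rewrite (proj2 (Nat.eqb_neq m j)), (proj2 (Nat.leb_le (S j) m)), Cadd_0_l by lia.
    replace (Cmul (y j) (x m)) with (Cmul (x m) (y j)) by (generalize (x m) (y j); intros; csolve).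
    apply (Cseries_ext (point j (Cmul (x m) (y j)))); [| apply Cseries_point].
    intros p. unfold point.
    destruct (Nat.eqb_spec p j), (Nat.eqb_spec (Nat.min m p) j); subst; try lia; reflexivity.
Qed.

Lemma conv_formula x y j : acex x -> acex y ->
  conv x y j = Cadd (Cmul (x j) (tailsum j y)) (Cmul (y j) (tailsum (S j) x)).
Proof.
  intros Hx Hy. unfold conv. apply Csum_unique.
  apply (Cseries_ext (fun m => Cadd (point j (Cmul (x j) (tailsum j y)) m)
                                    (Cmul (y j) (trunc (S j) x m)))).
  - intros m. symmetry. apply conv_row; exact Hy.
  - apply Cseries_add; [apply Cseries_point | apply Cseries_scal, Cseries_tailsum; exact Hx].
Qed.

Definition delta (k : nat) : nat -> Defs.C := point k one.

Lemma conv_delta p q : conv (delta p) (delta q) = delta (Nat.min p q).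
Proof.
  apply functional_extensionality. intros j.
  rewrite conv_formula by apply acex_point. unfold delta. rewrite !tailsum_point. unfold point.
  destruct (Nat.eqb_spec j p), (Nat.eqb_spec j q), (Nat.eqb_spec j (Nat.min p q)),
    (Nat.leb_spec j q), (Nat.leb_spec (S j) p); try lia; unfold one; csolve.
Qed.

Lemma sum_telescope (v Q : nat -> R) k N :
  (forall j, (k <= j)%nat -> v j = Q j - Q (S j)) ->
  sum_f_R0 (fun m => if Nat.leb k m then v m else 0) N = Q k - Q (Nat.max k (S N)).
Proof.
  intros Hv. induction N as [| N IH]; cbn [sum_f_R0].
  - destruct k as [| k]; cbn [Nat.leb].
    + rewrite Hv by lia. replace (Nat.max 0 1) with 1%nat by lia. ring.
    + replace (Nat.max (S k) 1) with (S k) by lia. ring.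
  - rewrite IH. destruct (Nat.leb_spec k (S N)).
    + rewrite Hv by lia.
      replace (Nat.max k (S N)) with (S N) by lia. replace (Nat.max k (S (S N))) with (S (S N)) by lia.
      ring.
    + replace (Nat.max k (S N)) with k by lia. replace (Nat.max k (S (S N))) with k by lia. ring.
Qed.

Lemma is_series_telescope (v Q : nat -> R) k :
  (forall j, (k <= j)%nat -> v j = Q j - Q (S j)) -> is_lim_seq Q 0 ->
  is_series (fun m => if Nat.leb k m then v m else 0) (Q k).
Proof.
  intros Hv HQ.
  assert (Htail : is_lim_seq (fun N => Q (Nat.max k (S N))) 0).
  { apply (is_lim_seq_ext_loc (fun N => Q (S N))).
    - exists k. intros N HN. f_equal. lia.
    - apply (is_lim_seq_incr_1 Q). exact HQ. }
  assert (H : is_lim_seq (fun N => Q k - Q (Nat.max k (S N))) (Q k - 0)).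
  { apply is_lim_seq_minus'; [apply is_lim_seq_const | exact Htail]. }
  rewrite Rminus_0_r in H.
  apply (is_lim_seq_ext _ (sum_n (fun m => if Nat.leb k m then v m else 0))) in H.
  - exact H.
  - intros N. rewrite sum_n_Reals. symmetry. apply sum_telescope; exact Hv.
Qed.

Lemma Cseries_telescope u (P : nat -> Defs.C) k :
  (forall j, (k <= j)%nat -> u j = Cadd (P j) (Copp (P (S j)))) ->
  is_lim_seq (fun j => fst (P j)) 0 -> is_lim_seq (fun j => snd (P j)) 0 ->
  Cseries (trunc k u) (P k).
Proof.
  intros Hu H1 H2. split.
  - apply (is_series_ext (fun m => if Nat.leb k m then fst (u m) else 0));
      [intros m; unfold trunc; destruct (Nat.leb k m); reflexivity |].
    apply (is_series_telescope _ (fun j => fst (P j))); [| exact H1].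
    intros j Hj. rewrite Hu by exact Hj. reflexivity.
  - apply (is_series_ext (fun m => if Nat.leb k m then snd (u m) else 0));
      [intros m; unfold trunc; destruct (Nat.leb k m); reflexivity |].
    apply (is_series_telescope _ (fun j => snd (P j))); [| exact H2].
    intros j Hj. rewrite Hu by exact Hj. reflexivity.
Qed.

(* Each [phi_k] is multiplicative: [(x * y)(j)] telescopes as
   [phi_j(x) phi_j(y) - phi_(j+1)(x) phi_(j+1)(y)]. *)
Lemma tailsum_conv k x y : acex x -> acex y ->
  tailsum k (conv x y) = Cmul (tailsum k x) (tailsum k y).
Proof.
  intros Hx Hy. destruct (tailsum_vanish x Hx) as [X1 X2], (tailsum_vanish y Hy) as [Y1 Y2].
  apply Csum_unique, (Cseries_telescope _ (fun j => Cmul (tailsum j x) (tailsum j y))).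
  - intros j _. rewrite conv_formula, (tailsum_split j x), (tailsum_split j y) by assumption.
    generalize (x j) (y j) (tailsum (S j) x) (tailsum (S j) y). intros. csolve.
  - replace (Finite 0) with (Finite (0 * 0 - 0 * 0)) by (f_equal; ring).
    apply is_lim_seq_minus'; apply is_lim_seq_mult'; assumption.
  - replace (Finite 0) with (Finite (0 * 0 + 0 * 0)) by (f_equal; ring).
    apply is_lim_seq_plus'; apply is_lim_seq_mult'; assumption.
Qed.

Section Weighted.

Variable w : nat -> R.
Hypothesis hw : forall n, 1 <= w n.

Lemma inL1_ex a : inL1 w a -> ex_series (fun n => Cmod (a n) * w n).
Proof. intros [l Hl]. exists l. apply is_series_Reals. exact Hl. Qed.

Lemma l1norm_Series a : inL1 w a -> l1norm w a = Series (fun n => Cmod (a n) * w n).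
Proof. intros Ha. apply Rsum_is_series, Series_correct, inL1_ex; exact Ha. Qed.

Lemma Series_le_l1norm a (u : nat -> R) : inL1 w a ->
  (forall m, 0 <= u m <= Cmod (a m) * w m) -> Series u <= l1norm w a.
Proof.
  intros Ha Hu. rewrite l1norm_Series by exact Ha.
  apply Series_le; [exact Hu | apply inL1_ex; exact Ha].
Qed.

(* Since [w >= 1], elements of l^1_w are absolutely summable, and [||a|| >= 0]. *)
Lemma inL1_acex a : inL1 w a -> acex a.
Proof.
  intros Ha. apply (@ex_series_le R_AbsRing R_CompleteNormedModule _ (fun n => Cmod (a n) * w n));
    [intros m | apply inL1_ex; exact Ha].
  change (Rabs (Cmod (a m)) <= Cmod (a m) * w m).
  rewrite Rabs_pos_eq by apply Cmod_nonneg.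
  pose proof (Cmod_nonneg (a m)); pose proof (hw m). nra.
Qed.

Lemma l1norm_nonneg a : inL1 w a -> 0 <= l1norm w a.
Proof.
  intros Ha. rewrite <- (is_series_unique _ _ (is_series_point 0 0)).
  apply Series_le_l1norm; [exact Ha |]. intros m.
  pose proof (Cmod_nonneg (a m)); pose proof (hw m). destruct (Nat.eqb m 0); split; nra.
Qed.

Lemma coord_bound a k : inL1 w a -> Cmod (a k) * w k <= l1norm w a.
Proof.
  intros Ha. rewrite <- (is_series_unique _ _ (is_series_point k (Cmod (a k) * w k))).
  apply Series_le_l1norm; [exact Ha |]. intros m.
  pose proof (Cmod_nonneg (a m)); pose proof (hw m).
  destruct (Nat.eqb_spec m k); subst; split; nra.
Qed.

(* [|phi_k(a)| <= 2 ||a||] (each real coordinate is bounded by [||a||]). *)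
Lemma tailsum_bound a k : inL1 w a -> Cmod (tailsum k a) <= 2 * l1norm w a.
Proof.
  intros Ha. pose proof (inL1_acex a Ha) as Hac.
  destruct (Cseries_tailsum k a Hac) as [H1 H2].
  assert (Hcoord : forall f : Defs.C -> R, (forall z, Rabs (f z) <= Cmod z) ->
            Rabs (Series (fun m => f (trunc k a m))) <= l1norm w a).
  { intros f Hf.
    assert (Hbound : forall m, Rabs (f (trunc k a m)) <= Cmod (a m) * w m).
    { intros m. eapply Rle_trans; [apply Hf |]. unfold trunc.
      pose proof (Cmod_nonneg (a m)); pose proof (hw m).
      destruct (Nat.leb k m); [nra | rewrite Cmod_C0; nra]. }
    eapply Rle_trans; [apply Series_Rabs |].
    - apply (@ex_series_le R_AbsRing R_CompleteNormedModule _ (fun m => Cmod (a m) * w m));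
        [intros m | apply inL1_ex; exact Ha].
      change (Rabs (Rabs (f (trunc k a m))) <= Cmod (a m) * w m).
      rewrite Rabs_Rabsolu. apply Hbound.
    - apply Series_le_l1norm; [exact Ha |]. intros m. split; [apply Rabs_pos | apply Hbound]. }
  eapply Rle_trans; [apply Cmod_le_parts |].
  rewrite <- (is_series_unique _ _ H1), <- (is_series_unique _ _ H2).
  pose proof (Hcoord fst Cmod_fst); pose proof (Hcoord snd Cmod_snd). lra.
Qed.

Lemma inL1_point k v : inL1 w (point k v).
Proof.
  exists (Cmod v * w k). apply is_series_Reals.
  apply (is_series_ext (fun m => if Nat.eqb m k then Cmod v * w k else 0)); [| apply is_series_point].
  intros m. unfold point. destruct (Nat.eqb_spec m k); subst; [reflexivity |].
  rewrite Cmod_C0, Rmult_0_l. reflexivity.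
Qed.

Lemma l1norm_point k v : l1norm w (point k v) = Cmod v * w k.
Proof.
  apply Rsum_is_series.
  apply (is_series_ext (fun m => if Nat.eqb m k then Cmod v * w k else 0)); [| apply is_series_point].
  intros m. unfold point. destruct (Nat.eqb_spec m k); subst; [reflexivity |].
  rewrite Cmod_C0, Rmult_0_l. reflexivity.
Qed.

End Weighted.

(** * The maps T_n *)

(* [T_n(a) = [phi_(n+2)(a), w(n) a(n) - w(n+1) a(n+1); 0, phi_n(a)]]: the diagonal
   consists of characters, the corner is an approximate derivation between them. *)
Definition Tn (w : nat -> R) (n : nat) (a : nat -> Defs.C) : M2 :=
  ((tailsum (S (S n)) a, Cadd (Cmul (w n, 0) (a n)) (Copp (Cmul (w (S n), 0) (a (S n))))),
   (C0, tailsum n a)).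

Section MapsTn.

Variable w : nat -> R.
Hypothesis hw : forall n, 1 <= w n.
Variable n : nat.

Lemma Cmod_weighted k a : inL1 w a -> Cmod (Cmul (w k, 0) (a k)) <= l1norm w a.
Proof.
  intros Ha. rewrite Cmod_mul, Cmod_real, Rabs_pos_eq by (pose proof (hw k); lra).
  rewrite Rmult_comm. apply coord_bound; assumption.
Qed.

Lemma Tn_esum a : inL1 w a -> esum (Tn w n a) <= 6 * l1norm w a.
Proof.
  intros Ha. unfold Tn, esum.
  pose proof (tailsum_bound w hw a (S (S n)) Ha); pose proof (tailsum_bound w hw a n Ha).
  pose proof (Cmod_weighted n a Ha); pose proof (Cmod_weighted (S n) a Ha).
  pose proof (Cmod_add (Cmul (w n, 0) (a n)) (Copp (Cmul (w (S n), 0) (a (S n))))).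
  rewrite Cmod_opp in *. rewrite Cmod_C0. lra.
Qed.

Lemma Tn_bounded_linear : is_bounded_linear w (Tn w n).
Proof.
  split; [| split].
  - intros a b Ha Hb. unfold Tn.
    rewrite !tailsum_add by (apply (inL1_acex w hw); assumption). unfold l1add.
    generalize (a n) (a (S n)) (b n) (b (S n)); intros; csolve.
  - intros c a Ha. unfold Tn.
    rewrite !tailsum_scal by (apply (inL1_acex w hw); assumption). unfold l1scal.
    generalize (a n) (a (S n)); intros; csolve.
  - exists 6. intros a Ha. eapply Rle_trans; [apply M2norm_le_esum | apply Tn_esum; exact Ha].
Qed.

Lemma Tn_opnorm : opnorm w (Tn w n) <= 6.
Proof.
  apply Rsup_le0; [lra |]. intros r [a [Ha [Hle ->]]].
  eapply Rle_trans; [apply M2norm_le_esum |].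
  eapply Rle_trans; [apply Tn_esum; exact Ha | lra].
Qed.

Lemma Tn_defect_matrix x y : acex x -> acex y ->
  M2sub (Tn w n (conv x y)) (M2mul (Tn w n x) (Tn w n y)) =
  ((C0, Cmul (w n + w (S n), 0) (Cmul (x (S n)) (y n))), (C0, C0)).
Proof.
  intros Hx Hy. unfold Tn.
  rewrite !tailsum_conv, !conv_formula by assumption.
  rewrite (tailsum_split n y), (tailsum_split (S n) y), (tailsum_split (S n) x) by assumption.
  generalize (x n) (x (S n)) (y n) (y (S n))
    (tailsum (S (S n)) x) (tailsum (S (S n)) y); intros; csolve.
Qed.

(* On the unit ball [|x(n+1)| <= 1/w(n+1)] and [|y(n)| <= 1/w(n)]. *)
Lemma Tn_defect : defect w (Tn w n) <= / w n + / w (S n).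
Proof.
  pose proof (hw n); pose proof (hw (S n)).
  assert (0 < / w n) by (apply Rinv_0_lt_compat; lra).
  assert (0 < / w (S n)) by (apply Rinv_0_lt_compat; lra).
  apply Rsup_le0; [lra |]. intros r [x [y [Hx [Hy [Hlx [Hly ->]]]]]].
  rewrite Tn_defect_matrix by (apply (inL1_acex w hw); assumption).
  eapply Rle_trans; [apply M2norm_le_esum |]. simpl.
  rewrite !Cmod_C0, !Cmod_mul, Cmod_real, Rabs_pos_eq by lra.
  pose proof (coord_bound w hw x (S n) Hx); pose proof (coord_bound w hw y n Hy).
  set (p := Cmod (x (S n))) in *. set (q := Cmod (y n)) in *.
  assert (0 <= p) by apply Cmod_nonneg. assert (0 <= q) by apply Cmod_nonneg.
  assert (p <= / w (S n)) by (apply (Rmult_le_reg_r (w (S n))); [lra | rewrite Rinv_l; lra]).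
  assert (q <= / w n) by (apply (Rmult_le_reg_r (w n)); [lra | rewrite Rinv_l; lra]).
  assert ((w n + w (S n)) * (p * q) <= q + p) by nra.
  lra.
Qed.

End MapsTn.

(** * Distance from T_n to the multiplicative maps *)

Definition unit_point (w : nat -> R) (k : nat) : nat -> Defs.C := point k (/ w k, 0).

Section Distance.

Variable w : nat -> R.
Hypothesis hw : forall n, 1 <= w n.

(* The zero map belongs to Mult, so the distance to Mult is an infimum over a
   nonempty set. *)
Lemma mult_zero : is_mult w (fun _ => M0).
Proof.
  split; [split; [| split] |].
  - intros; unfold M0; csolve.
  - intros; unfold M0; csolve.
  - exists 0. intros a Ha. eapply Rle_trans; [apply M2norm_le_esum |]. simpl.
    rewrite !Cmod_C0. lra.
  - intros; unfold M0; csolve.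
Qed.

Lemma mult_delta Phi p q : is_mult w Phi ->
  M2mul (Phi (delta p)) (Phi (delta q)) = Phi (delta (Nat.min p q)).
Proof. intros [_ Hmul]. rewrite <- Hmul by apply inL1_point. rewrite conv_delta. reflexivity. Qed.

(* By [idem_chain] applied to [Phi(delta_k) <= Phi(delta_(k+1))]: the corner entries
   of [Phi(delta_k)] and [Phi(delta_(k+1))] are either equal or one of them is 0. *)
Lemma mult_corner_cases Phi k : is_mult w Phi ->
  ent12 (Phi (delta k)) = C0 \/ ent12 (Phi (delta (S k))) = C0 \/
  ent12 (Phi (delta k)) = ent12 (Phi (delta (S k))).
Proof.
  intros HPhi.
  destruct (idem_chain (Phi (delta k)) (Phi (delta (S k)))) as [E | [E | E]].
  - rewrite (mult_delta Phi k k HPhi), Nat.min_id. reflexivity.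
  - rewrite (mult_delta Phi (S k) (S k) HPhi), Nat.min_id. reflexivity.
  - rewrite (mult_delta Phi k (S k) HPhi), Nat.min_l by lia. reflexivity.
  - rewrite (mult_delta Phi (S k) k HPhi), Nat.min_r by lia. reflexivity.
  - left. rewrite E. reflexivity.
  - right; right. rewrite E. reflexivity.
  - right; left. rewrite E. reflexivity.
Qed.

Lemma bound_on_ball K x : 0 <= x <= 1 -> K * x <= Rabs K.
Proof.
  intros Hx. pose proof (Rle_abs K); pose proof (Rabs_pos K).
  assert (K * x <= Rabs K * x) by (apply Rmult_le_compat_r; lra). nra.
Qed.

(* For bounded [T], [Phi], the value [||(T - Phi) a||] on the unit ball is below [||T - Phi||]
   (the relevant set of reals is bounded, so [Rsup] is its supremum). *)
Lemma opnorm_ge T Phi a : is_bounded_linear w T -> is_bounded_linear w Phi ->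
  inL1 w a -> l1norm w a <= 1 ->
  M2norm (M2sub (T a) (Phi a)) <= opnorm w (fun b => M2sub (T b) (Phi b)).
Proof.
  intros [_ [_ [KT HT]]] [_ [_ [KPhi HPhi]]] Ha Hle.
  apply (Rsup_ge _ (4 * Rabs KT + 4 * Rabs KPhi)); [| exists a; auto].
  intros r [b [Hb [Hbl ->]]].
  pose proof (l1norm_nonneg w hw b Hb).
  pose proof (HT b Hb); pose proof (HPhi b Hb).
  pose proof (bound_on_ball KT (l1norm w b)); pose proof (bound_on_ball KPhi (l1norm w b)).
  pose proof (M2norm_sub_le (T b) (Phi b)). lra.
Qed.

Lemma unit_point_ball k : inL1 w (unit_point w k) /\ l1norm w (unit_point w k) <= 1.
Proof.
  unfold unit_point. split; [apply inL1_point |].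
  rewrite l1norm_point, Cmod_real, Rabs_pos_eq.
  - rewrite Rinv_l; [lra | pose proof (hw k); lra].
  - apply Rlt_le, Rinv_0_lt_compat. pose proof (hw k); lra.
Qed.

Lemma unit_point_scal k : unit_point w k = l1scal (/ w k, 0) (delta k).
Proof.
  apply functional_extensionality. intros m. unfold unit_point, l1scal, delta, point, one.
  destruct (Nat.eqb m k); [| csolve]. cbv [Cmul fst snd]. apply pair_eq; ring.
Qed.

Lemma Tn_corner_unit n :
  ent12 (Tn w n (unit_point w n)) = one /\ ent12 (Tn w n (unit_point w (S n))) = (-1, 0).
Proof.
  pose proof (hw n); pose proof (hw (S n)).
  unfold Tn, ent12, unit_point, point, one; cbn [fst snd].
  rewrite !Nat.eqb_refl, (proj2 (Nat.eqb_neq (S n) n)), (proj2 (Nat.eqb_neq n (S n))) by lia.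
  cbv [Cadd Cmul Copp C0 fst snd]. split; apply pair_eq; field; lra.
Qed.

(* Any multiplicative [Phi] is at distance at least 1/2 from [T_n]: otherwise the
   real parts of the corner entries of [Phi(delta_n)] and [Phi(delta_(n+1))] would be
   of opposite signs, which [mult_corner_cases] forbids. *)
Lemma Tn_far_from_mult n Phi : is_mult w Phi ->
  1/2 <= opnorm w (fun a => M2sub (Tn w n a) (Phi a)).
Proof.
  intros HPhi. apply Rnot_lt_le. intros Hlt.
  assert (Hclose : forall k, Rabs (fst (ent12 (Tn w n (unit_point w k)))
                                   + - fst (ent12 (Phi (unit_point w k)))) < 1/2).
  { intros k. destruct (unit_point_ball k) as [Hin Hle].
    pose proof (ent12_le_M2norm (M2sub (Tn w n (unit_point w k)) (Phi (unit_point w k)))) as H.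
    pose proof (opnorm_ge _ _ _ (Tn_bounded_linear w hw n) (proj1 HPhi) Hin Hle).
    rewrite ent12_sub in H. pose proof (Cmod_fst (Cadd (ent12 (Tn w n (unit_point w k)))
                                                    (Copp (ent12 (Phi (unit_point w k)))))).
    simpl fst in *. lra. }
  assert (Hcorner : forall k, fst (ent12 (Phi (unit_point w k)))
                              = / w k * fst (ent12 (Phi (delta k)))).
  { intros k. destruct HPhi as [[_ [Hsc _]] _].
    rewrite unit_point_scal, Hsc by apply inL1_point.
    destruct (Phi (delta k)) as [[a b] [c [d1 d2]]]. destruct b as [b1 b2]. simpl. ring. }
  destruct (Tn_corner_unit n) as [T1 T2].
  pose proof (Hclose n) as C1; pose proof (Hclose (S n)) as C2.
  rewrite Hcorner, T1 in C1. rewrite Hcorner, T2 in C2. unfold one in C1; simpl in C1, C2.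
  apply Rabs_def2 in C1; apply Rabs_def2 in C2.
  assert (0 < / w n) by (apply Rinv_0_lt_compat; pose proof (hw n); lra).
  assert (0 < / w (S n)) by (apply Rinv_0_lt_compat; pose proof (hw (S n)); lra).
  assert (Hs : 0 < fst (ent12 (Phi (delta n)))) by nra.
  assert (Ht : fst (ent12 (Phi (delta (S n)))) < 0) by nra.
  destruct (mult_corner_cases Phi n HPhi) as [E | [E | E]]; rewrite E in *; simpl in *; lra.
Qed.

Lemma Tn_dist_mult n : 1/2 <= dist_mult w (Tn w n).
Proof.
  apply Rinf_ge.
  - exists (opnorm w (fun a => M2sub (Tn w n a) M0)). exists (fun _ => M0).
    split; [apply mult_zero | reflexivity].
  - intros r [Phi [HPhi ->]]. apply Tn_far_from_mult; exact HPhi.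
Qed.

End Distance.

Lemma inv_sum_lt d a b : 0 < d -> 2 / d < Rmin a b -> / a + / b < d.
Proof.
  intros Hd Hab.
  assert (Hinv : forall x, 2 / d < x -> / x < d / 2).
  { intros x Hx.
    assert (0 < 2 / d) by (unfold Rdiv; apply Rmult_lt_0_compat; [lra | apply Rinv_0_lt_compat; lra]).
    replace (d / 2) with (/ (2 / d)) by (field; lra).
    apply Rinv_lt_contravar; [nra | exact Hx]. }
  pose proof (Hinv a (Rlt_le_trans _ _ _ Hab (Rmin_l a b))).
  pose proof (Hinv b (Rlt_le_trans _ _ _ Hab (Rmin_r a b))). lra.
Qed.

(* Given K = 6 and eps = 1/4, any candidate delta is defeated by T_n for an n with
   w(n), w(n+1) > 2/delta. *)
Theorem theoremt (w : nat -> R)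
  (hw : forall n, 1 <= w n)
  (hsup : forall M : R, exists n, M < Rmin (w n) (w (S n))) :
  ~ AMNM_pair w.
Proof.
  intros Hamnm.
  destruct (Hamnm 6 (1/4)) as [d [Hd Hdelta]]; [lra | lra |].
  destruct (hsup (2 / d)) as [n Hn].
  assert (Hdef : defect w (Tn w n) <= d).
  { pose proof (Tn_defect w hw n). pose proof (inv_sum_lt d _ _ Hd Hn). lra. }
  pose proof (Hdelta (Tn w n) (Tn_bounded_linear w hw n) (Tn_opnorm w hw n) Hdef).
  pose proof (Tn_dist_mult w hw n). lra.
Qed.
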